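(* Let $N\ge 1$ be an integer and let $\mu$ be a real number with $-N<\mu<1$. Then every complex root of the polynomial $$p(\lambda)=\lambda^{N}-\frac{\mu}{N}\big(\lambda^{N-1}+\lambda^{N-2}+\cdots+\lambda+1\big)$$ lies in the open unit disc $\{\lambda\in\mathbb{C}:|\lambda|<1\}$.
   Context: This is the characteristic polynomial $\lambda^N-\mu(a_1\lambda^{N-1}+\cdots+a_N)$ of the delayed feedback control for a fixed point (1-cycle) with multiplier $\mu$, using uniform coefficients $a_1=\cdots=a_N=1/N$; the claim is that this polynomial is Schur stable for all $\mu\in(-N,1)$. *)

From HB Require Import structures.
From mathcomp Require Import all_boot all_order all_algebra.
From mathcomp Require Import complex.
Set Implicit Arguments. Unset Strict Implicit. Unset Printing Implicit Defensive.
Import Order.TTheory GRing.Theory Num.Theory.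
Local Open Scope ring_scope.
Local Open Scope complex_scope.

Definition dfc_poly (R : rcfType) (N : nat) (mu : R) : {poly R[i]} :=
  'X^N - ((mu / N%:R)%:C)%:P * \sum_(i < N) 'X^i.

(* Write a = mu / N, so a root satisfies z^N = a (1 + z + ... + z^(N-1)), and
   suppose |z| >= 1.  If a >= 0, the triangle inequality and z^i <= z^(N-1)
   give |z| <= a N = mu < 1.  If -1 < a < 0, multiplying by z - 1 yields
   z^N (z - (1 + a)) = -a, so |z - (1 + a)| <= -a: z lies in the closed disc
   of centre 1 + a and radius -a, which meets {|z| >= 1} only at z = 1, and
   z = 1 would force a N = 1. *)

From HB Require Import structures.
From mathcomp Require Import all_boot all_order all_algebra.
From mathcomp Require Import complex ring.
Set Implicit Arguments. Unset Strict Implicit.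
Import Order.TTheory GRing.Theory Num.Theory.
Local Open Scope ring_scope.
Local Open Scope complex_scope.

Lemma norm_le_of_exprn_eq_geom (F : numDomainType) (N : nat) (a z : F) :
  (0 < N)%N -> 0 <= a -> z ^+ N = a * \sum_(i < N) z ^+ i ->
  1 <= `|z| -> `|z| <= a * N%:R.
Proof.
case: N => // n _ a_ge0 eq_zN z_ge1.
have zn_gt0 : 0 < `|z| ^+ n by rewrite exprn_gt0 // (lt_le_trans ltr01 z_ge1).
have sum_le : \sum_(i < n.+1) `|z| ^+ i <= n.+1%:R * `|z| ^+ n.
  have -> : n.+1%:R * `|z| ^+ n = \sum_(i < n.+1) `|z| ^+ n.
    by rewrite sumr_const card_ord mulr_natl.
  by apply: ler_sum => i _; apply: ler_weXn2l; rewrite // -ltnS.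
rewrite -(ler_pM2r zn_gt0) -exprS -(normrX n.+1) eq_zN normrM ger0_norm //.
rewrite -mulrA ler_wpM2l //; apply: le_trans (ler_norm_sum _ _ _) _.
by under eq_bigr do rewrite normrX.
Qed.

Lemma mul_subr_of_exprn_eq_geom (T : comNzRingType) (N : nat) (a z : T) :
  z ^+ N = a * \sum_(i < N) z ^+ i -> z ^+ N * (z - (1 + a)) = - a.
Proof.
set S := \sum_(i < N) _ => eq_zN.
have eq_sub1 : (z - 1) * S = a * S - 1 by rewrite -subrX1 eq_zN.
transitivity (a * ((z - 1) * S) - a * (a * S)); first by rewrite eq_zN; ring.
by rewrite eq_sub1; ring.
Qed.

Lemma eq1_in_tangent_disc (C : numClosedFieldType) (c z : C) :
  0 < c -> 1 <= `|z| -> `|z - c| <= 1 - c -> z = 1.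
Proof.
move=> c_gt0 z_ge1; rewrite lerBrDr => zc_le1.
have norm_c : `|c| = c by rewrite gtr0_norm.
have triangle : `|z| <= `|z - c| + `|c| by rewrite -{1}(subrK c z) ler_normD.
have z_le1 : `|z| <= 1 by rewrite (le_trans triangle) // norm_c.
have eq_norm : `|(z - c) + c| = `|z - c| + `|c|.
  by apply/eqP; rewrite subrK eq_le triangle norm_c (le_trans zc_le1).
have [t _ [Dzc Dc]] := normCDeq eq_norm.
have t1 : t = 1.
  have c_neq0 : c != 0 by rewrite gt_eqF.
  by apply: (mulfI c_neq0); rewrite mulr1 -{1}norm_c -Dc.
have z_ge0 : 0 <= z by rewrite -(subrK c z) Dzc t1 mulr1 addr_ge0 // ltW.
by rewrite -(ger0_norm z_ge0); apply/eqP; rewrite eq_le z_le1 z_ge1.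
Qed.

Lemma norm_lt1_of_exprn_eq_geom (C : numClosedFieldType) (N : nat) (a z : C) :
  (0 < N)%N -> -1 < a -> a * N%:R < 1 -> z ^+ N = a * \sum_(i < N) z ^+ i ->
  `|z| < 1.
Proof.
move=> N_gt0 a_gtN1 aN_lt1 eq_zN.
rewrite real_ltNge ?normr_real ?real1 //; apply/negP => z_ge1.
have a_real : a \is Num.real by rewrite -(ler_real (ltW a_gtN1)) rpredN1.
have [a_ge0 | a_lt0] := real_leP (real0 C) a_real.
  have := le_lt_trans (norm_le_of_exprn_eq_geom N_gt0 a_ge0 eq_zN z_ge1) aN_lt1.
  by rewrite real_ltNge ?normr_real ?real1 // z_ge1.
have zc_le : `|z - (1 + a)| <= 1 - (1 + a).
  have -> : 1 - (1 + a) = - a by rewrite opprD addrA subrr sub0r.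
  have norm_eq : `|z| ^+ N * `|z - (1 + a)| = - a.
    by rewrite -normrX -normrM (mul_subr_of_exprn_eq_geom eq_zN) normrN ltr0_norm.
  by rewrite -norm_eq ler_peMl // exprn_ege1.
have a1_gt0 : 0 < 1 + a by rewrite addrC -ltrBlDr sub0r.
move: eq_zN; rewrite (eq1_in_tangent_disc a1_gt0 z_ge1 zc_le) expr1n.
under eq_bigr do rewrite expr1n.
by rewrite sumr_const card_ord => aN_eq1; rewrite -aN_eq1 ltxx in aN_lt1.
Qed.

Lemma root_dfc_poly_geom (R : rcfType) (N : nat) (mu : R) (z : R[i]) :
  root (dfc_poly N mu) z -> z ^+ N = (mu / N%:R)%:C * \sum_(i < N) z ^+ i.
Proof.
rewrite /root /dfc_poly !hornerE horner_sum subr_eq0 => /eqP ->.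
by under eq_bigr do rewrite hornerXn.
Qed.

Theorem mainTheorem3 (R : rcfType) (N : nat) (mu : R) :
  (1 <= N)%N -> - (N%:R) < mu -> mu < 1 ->
  forall z : R[i], root (dfc_poly N mu) z -> `|z| < 1.
Proof.
move=> N_gt0 mu_gtN mu_lt1 z /root_dfc_poly_geom eq_zN.
have N_neq0 : N%:R != 0 :> R by rewrite pnatr_eq0 -lt0n.
apply: (norm_lt1_of_exprn_eq_geom N_gt0 _ _ eq_zN).
  by rewrite -(rmorphN1 (real_complex R)) ltcR ltr_pdivlMr ?ltr0n // mulN1r.
by rewrite -(rmorph_nat (real_complex R)) -rmorphM ltcR divfK.
Qed.
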